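(* Let $m\ge1$ and let $X\subset\sqrt{m}\,\mathbb{S}^{m-1}$ be a spherical $2$-design with $|X|=n$. Then $F_0=\frac1nJ$ and $F_1=G$.
   Context: $\sqrt{m}\,\mathbb{S}^{m-1}=\{\bm x\in\mathbb{R}^m:\bm x\cdot\bm x=m\}$. $X$ is a spherical $2$-design if the average over $X$ of every polynomial of degree at most $2$ equals its average over the sphere (equivalently $\sum_{\bm y\in X}\bm x\cdot\bm y=0$ and $\frac1n\sum_{\bm z\in X}(\bm x\cdot\bm z)(\bm z\cdot\bm y)=\bm x\cdot\bm y$ for all $\bm x,\bm y\in X$). $C(X)$: real functions on $X$ with $(f,g)=\frac1n\sum_{\bm x}f(\bm x)g(\bm x)$. $\zeta_{\bm a}(p)(\bm x)=p(\bm a\cdot\bm x)$. $\mathrm{Pol}_0(X)$ = constants, $\mathrm{Pol}_1(X)=\mathrm{Span}\{\zeta_{\bm a}(p):\bm a\in X,\deg p\le1\}$, $\mathrm{Pol}_k(X)=\mathrm{Span}\{fg:f\in\mathrm{Pol}_1(X),g\in\mathrm{Pol}_{k-1}(X)\}$. $S=\min\{i:\mathrm{Pol}_i(X)=C(X)\}$. $\mathrm{Harm}_0=\mathrm{Pol}_0$, $\mathrm{Harm}_k=\mathrm{Pol}_k\cap\mathrm{Pol}_{k-1}^\perp$ ($k\ge1$). Matrices indexed by $X\times X$ act on $C(X)$ by $(Mf)(\bm x)=\sum_{\bm y}M_{\bm x,\bm y}f(\bm y)$, and $F_i$ ($0\le i\le S$) is the matrix of the orthogonal projection onto $\mathrm{Harm}_i(X)$.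 $J$ is the all-ones matrix and $G=\frac1n(\bm x\cdot\bm y)_{\bm x,\bm y\in X}$. *)

From HB Require Import structures.
From mathcomp Require Import all_boot all_order all_algebra.
Set Implicit Arguments. Unset Strict Implicit. Unset Printing Implicit Defensive.
Import Order.TTheory GRing.Theory Num.Theory.
Local Open Scope ring_scope.

Definition dotv (R : ringType) (m : nat) (u v : 'rV[R]_m) : R :=
  \sum_(k < m) u 0 k * v 0 k.

(* Functions on X = {x_0,...,x_{n-1}} are row vectors 'rV_n; subspaces of
   C(X) are represented (mxalgebra style) by the row space of an n x n matrix. *)

Definition pmul (R : ringType) (n : nat) (u v : 'rV[R]_n) : 'rV[R]_n :=
  \row_k (u 0 k * v 0 k).

Definition zeta (R : ringType) (n m : nat) (x : 'I_n -> 'rV[R]_m) (a : 'I_n)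
  : 'rV[R]_n := \row_k dotv (x a) (x k).

Definition Pol0 (R : fieldType) (n : nat) : 'M[R]_n :=
  (<< (const_mx 1 : 'rV[R]_n) >>)%MS.

(* Pol_1(X) = Span{ zeta_a(p) : a in X, deg p <= 1 } = Span{1, zeta_a(id)} *)
Definition Pol1 (R : fieldType) (n m : nat) (x : 'I_n -> 'rV[R]_m) : 'M[R]_n :=
  (Pol0 R n + \sum_(a < n) << zeta x a >>)%MS.

(* Span of the pointwise products f g, f in rowspace A, g in rowspace B
   (spanned by the products of spanning rows, by bilinearity). *)
Definition PolMul (R : fieldType) (n : nat) (A B : 'M[R]_n) : 'M[R]_n :=
  (\sum_(i < n) \sum_(j < n) << pmul (row i A) (row j B) >>)%MS.

Fixpoint Pol (R : fieldType) (n m : nat) (x : 'I_n -> 'rV[R]_m) (k : nat)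
  : 'M[R]_n :=
  match k with
  | 0 => Pol0 R n
  | k'.+1 => match k' with
             | 0 => Pol1 x
             | _ => PolMul (Pol1 x) (Pol x k')
             end
  end.

(* Harm_0 = Pol_0, Harm_k = Pol_k \cap Pol_{k-1}^perp.  The orthogonal
   complement w.r.t. (f,g) = 1/n sum f g is the left kernel of A^T. *)
Definition Harm (R : fieldType) (n m : nat) (x : 'I_n -> 'rV[R]_m) (k : nat)
  : 'M[R]_n :=
  match k with
  | 0 => Pol0 R n
  | k'.+1 => (Pol x k'.+1 :&: kermx (Pol x k')^T)%MS
  end.

(* Matrix (acting on column functions, (Mf)(x) = sum_y M x y f y) of the
   orthogonal projection onto the row space of H: projection onto H along
   its orthogonal complement. proj_mx acts by right multiplication on rows,
   hence the transpose. *)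
Definition orth_proj (R : fieldType) (n : nat) (H : 'M[R]_n) : 'M[R]_n :=
  (proj_mx H (kermx H^T))^T.

Definition Fmx (R : fieldType) (n m : nat) (x : 'I_n -> 'rV[R]_m) (i : nat)
  : 'M[R]_n := orth_proj (Harm x i).

Definition Gram (R : fieldType) (n m : nat) (x : 'I_n -> 'rV[R]_m) : 'M[R]_n :=
  \matrix_(i, j) (n%:R^-1 * dotv (x i) (x j)).

(* spherical 2-design, in the equivalent form given in the paper *)
Definition is_2design (R : fieldType) (n m : nat) (x : 'I_n -> 'rV[R]_m) : Prop :=
  (forall i, \sum_(j < n) dotv (x i) (x j) = 0) /\
  (forall i j, n%:R^-1 * (\sum_(k < n) dotv (x i) (x k) * dotv (x k) (x j))
               = dotv (x i) (x j)).

From HB Require Import structures.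
From mathcomp Require Import all_boot all_order all_algebra ring.
Set Implicit Arguments.
Unset Strict Implicit.
Unset Printing Implicit Defensive.

Import Order.TTheory GRing.Theory Num.Theory.
Local Open Scope ring_scope.

(* Both projections are identified through the characterization of an
   orthogonal projection as a symmetric idempotent matrix with the prescribed
   row space.  [J/n] is symmetric and idempotent with the constants as row
   space.  [G] is symmetric; it is idempotent by the second design identity,
   and its rows are the functions [zeta_a / n], so its row space is the span
   of the [zeta_a]; the first design identity makes these orthogonal to the
   constants, which cuts [Pol_1 :&: Pol_0^perp] down to exactly that span. *)

Section OrthogonalProjection.

Variable R : realFieldType.

Lemma mulmx_tr_eq0 (n : nat) (u : 'rV[R]_n) : u *m u^T = 0 -> u = 0.
Proof.
move=> /(congr1 (fun M : 'M_1 => M 0 0)); rewrite !mxE => /eqP.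
rewrite psumr_eq0 => [/allP uu0|i _]; last by rewrite !mxE -expr2 sqr_ge0.
apply/rowP => k; move/(_ k (mem_index_enum _)): uu0.
by rewrite !mxE mulf_eq0 orbb => /eqP ->.
Qed.

Lemma capmx_kermx_tr (p n : nat) (H : 'M[R]_(p, n)) : (H :&: kermx H^T = 0)%MS.
Proof.
apply/eqP; rewrite -submx0; apply/rV_subP => u.
rewrite sub_capmx submx0 => /andP[/submxP[D ->] /sub_kermxP uHT].
apply/eqP/mulmx_tr_eq0.
by rewrite trmx_mul mulmxA uHT mul0mx.
Qed.

Lemma orth_proj_eq (n : nat) (H P : 'M[R]_n) :
  P^T = P -> P *m P = P -> (H == P)%MS -> orth_proj H = P.
Proof.
move=> PT PP /andP[HP PH]; rewrite /orth_proj -[RHS]PT; congr trmx.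
have capH := capmx_kermx_tr H.
rewrite -[proj_mx _ _]mul1mx -(subrK P 1%:M) mulmxDl.
rewrite (proj_mx_id capH PH) proj_mx_0 ?add0r //.
apply/sub_kermxP; case/submxP: HP => D ->.
by rewrite trmx_mul PT mulmxA mulmxBl PP mul1mx subrr mul0mx.
Qed.

Lemma capmx_addsmx_kermx_tr (n p q : nat) (A : 'M[R]_(p, n)) (B : 'M[R]_(q, n)) :
  (B <= kermx A^T)%MS -> ((A + B)%MS :&: kermx A^T <= B)%MS.
Proof.
move=> BK; apply/rV_subP => u; rewrite sub_capmx => /andP[].
case/sub_addsmxP => -[a b] /= -> abK.
have aK : (a *m A <= kermx A^T)%MS.
  have bK : (b *m B <= kermx A^T)%MS := submx_trans (submxMl b B) BK.
  by rewrite -[a *m A](addrK (b *m B)) addmx_sub ?eqmx_opp.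
suff -> : a *m A = 0 by rewrite add0r submxMl.
apply/eqP; rewrite -submx0 -(capmx_kermx_tr A).
by rewrite sub_capmx submxMl aK.
Qed.

End OrthogonalProjection.

Lemma const_mx_mul (R : ringType) (p k q : nat) (a b : R) :
  (const_mx a : 'M_(p, k)) *m (const_mx b : 'M_(k, q)) = const_mx (a * b *+ k).
Proof.
apply/matrixP => i j; rewrite !mxE.
under eq_bigr do rewrite !mxE.
by rewrite sumr_const card_ord.
Qed.

Lemma const_mx_eqmx (R : fieldType) (p n : nat) (a : R) : a != 0 ->
  ((const_mx a : 'M_(p.+1, n)) == (const_mx 1 : 'rV_n))%MS.
Proof.
move=> a0; apply/andP; split.
  have -> : (const_mx a : 'M_(p.+1, n)) = (const_mx a : 'cV_p.+1) *m const_mx 1.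
    by rewrite const_mx_mul mulr1 mulr1n.
  exact: submxMl.
have -> : (const_mx 1 : 'rV_n) = a^-1 *: row 0 (const_mx a : 'M_(p.+1, n)).
  by apply/rowP => j; rewrite !mxE mulVf.
by rewrite scalemx_sub ?row_sub.
Qed.

Lemma dotvC (R : comRingType) (m : nat) (u v : 'rV[R]_m) :
  dotv u v = dotv v u.
Proof. by apply: eq_bigr => k _; rewrite mulrC. Qed.

Section ConstantProjection.

Variables (R : numFieldType) (n : nat).

Let N : R := n.+1%:R.
Let N_neq0 : N != 0. Proof. by rewrite pnatr_eq0. Qed.

Lemma scaled_ones_idem :
  let P := N^-1 *: (const_mx 1 : 'M[R]_n.+1) in P *m P = P.
Proof.
rewrite /= -scalemxAl -scalemxAr const_mx_mul mulr1 scalerA.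
by apply/matrixP => i j; rewrite !mxE -/N -mulrA mulVf ?mulr1.
Qed.

Lemma Pol0_eqmx_scaled_ones :
  (Pol0 R n.+1 == N^-1 *: (const_mx 1 : 'M_n.+1))%MS.
Proof.
have -> : N^-1 *: (const_mx 1 : 'M_n.+1) = const_mx N^-1.
  by apply/matrixP => i j; rewrite !mxE mulr1.
by rewrite /Pol0 !genmxE andbC const_mx_eqmx ?invr_eq0.
Qed.

End ConstantProjection.

Section Design.

Variables (R : realFieldType) (n m : nat) (x : 'I_n.+1 -> 'rV[R]_m).

Let N : R := n.+1%:R.
Let N_neq0 : N != 0. Proof. by rewrite pnatr_eq0. Qed.

Lemma Gram_tr : (Gram x)^T = Gram x.
Proof. by apply/matrixP => i j; rewrite !mxE dotvC. Qed.

Lemma row_Gram i : row i (Gram x) = N^-1 *: zeta x i.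
Proof. by apply/rowP => j; rewrite !mxE. Qed.

Lemma Gram_eqmx_zeta : (Gram x == \sum_(a < n.+1) << zeta x a >>)%MS.
Proof.
apply/andP; split.
  apply/row_subP => i.
  by rewrite row_Gram scalemx_sub // (sumsmx_sup i) ?genmxE.
apply/sumsmx_subP => i _.
rewrite genmxE -[zeta x i]scale1r -(mulfV N_neq0) -scalerA -row_Gram.
by rewrite scalemx_sub ?row_sub.
Qed.

Lemma Gram_idem :
  (forall i j, N^-1 * (\sum_(k < n.+1) dotv (x i) (x k) * dotv (x k) (x j))
               = dotv (x i) (x j)) ->
  Gram x *m Gram x = Gram x.
Proof.
move=> design2; apply/matrixP => i j.
rewrite !mxE -design2 !mulr_sumr.
by apply: eq_bigr => k _; rewrite !mxE; ring.
Qed.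

Lemma Gram_ortho_Pol0 :
  (forall i, \sum_(j < n.+1) dotv (x i) (x j) = 0) ->
  (Gram x <= kermx (Pol0 R n.+1)^T)%MS.
Proof.
move=> design1; apply/sub_kermxP.
have /submxP[E ->] : (Pol0 R n.+1 <= (const_mx 1 : 'rV_n.+1))%MS.
  by rewrite /Pol0 genmxE.
rewrite trmx_mul mulmxA.
suff -> : Gram x *m (const_mx 1 : 'rV_n.+1)^T = 0 by rewrite mul0mx.
apply/matrixP => i j; rewrite !mxE.
under eq_bigr do rewrite !mxE mulr1.
by rewrite -mulr_sumr design1 mulr0.
Qed.

Lemma Harm1_eqmx_Gram :
  (forall i, \sum_(j < n.+1) dotv (x i) (x j) = 0) ->
  (Harm x 1 == Gram x)%MS.
Proof.
move=> design1; have /andP[GZ ZG] := Gram_eqmx_zeta.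
have GK := Gram_ortho_Pol0 design1.
have ZK := submx_trans ZG GK.
apply/andP; split; first exact: submx_trans (capmx_addsmx_kermx_tr ZK) ZG.
by rewrite sub_capmx GK andbT (submx_trans GZ) ?addsmxSr.
Qed.

End Design.

Theorem lemma3p3 (R : realFieldType) (m n : nat) (x : 'I_n -> 'rV[R]_m) :
  (1 <= m)%N ->
  injective x ->
  (forall i, dotv (x i) (x i) = m%:R) ->
  is_2design x ->
  Fmx x 0 = n%:R^-1 *: const_mx 1 /\ Fmx x 1 = Gram x.
Proof.
move=> _ _ _ [design1 design2].
case: n x design1 design2 => [|n] x design1 design2.
  by split; apply/matrixP => -[].
split; apply: orth_proj_eq.
- by apply/matrixP => i j; rewrite !mxE.
- exact: scaled_ones_idem.
- exact: Pol0_eqmx_scaled_ones.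
- exact: Gram_tr.
- exact: Gram_idem.
- exact: Harm1_eqmx_Gram.
Qed.
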